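(* Let $K$ be a complete discretely valued field with ring of integers $\mathcal{O}_K$. Let $F\in\mathcal{O}_K[x,y]$ be homogeneous of degree $n$ with $F(x,1)$ monic, let $L$ be the splitting field of $F(x,1)$ over $K$ with normalized valuation $v$, and let $\alpha_1,\dots,\alpha_n$ be the roots of $F(x,1)$ in $L$. Let $h\in\mathcal{O}_K$ with $v(h)>0$. Let $(a,b),(a',b')\in\mathcal{O}_K^2$ be primitive solutions of $F(x,y)=h$ (i.e. $a\mathcal{O}_K+b\mathcal{O}_K=a'\mathcal{O}_K+b'\mathcal{O}_K=\mathcal{O}_K$). Suppose that for some index $i$, $v(a-\alpha_ib)=\max_j v(a-\alpha_jb)$ and $v(a'-\alpha_ib')=\max_j v(a'-\alpha_jb')$. Then $v(a-\alpha_ib)=v(a'-\alpha_ib')$. *)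

From HB Require Import structures.
From mathcomp Require Import all_boot all_order all_algebra all_field.
From mathcomp Require Import constructive_ereal.
Set Implicit Arguments. Unset Strict Implicit. Unset Printing Implicit Defensive.
Import Order.TTheory GRing.Theory Num.Theory.
Local Open Scope ring_scope.
Local Open Scope ereal_scope.

Definition normalized_discrete_valuation (R : fieldType) (v : R -> \bar int) : Prop :=
  [/\ forall x, v x = +oo <-> x = 0%R,
      forall x y, v (x * y)%R = v x + v y,
      forall x y, mine (v x) (v y) <= v (x + y)%R
    & forall m : int, exists x, v x = m%:E ].

Definition v_complete (R : fieldType) (v : R -> \bar int) : Prop :=
  forall u : nat -> R,
    (forall N : int, exists m : nat, forall p q : nat,
        (m <= p)%N -> (m <= q)%N -> N%:E <= v (u p - u q)%R) ->
    exists l : R, forall N : int, exists m : nat, forall p : nat,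
        (m <= p)%N -> N%:E <= v (u p - l)%R.

Definition in_OK (R : fieldType) (v : R -> \bar int) (x : R) : Prop := 0 <= v x.

Definition primitive_pair (R : fieldType) (v : R -> \bar int) (a b : R) : Prop :=
  in_OK v a /\ in_OK v b /\
  exists u w : R, in_OK v u /\ in_OK v w /\ (u * a + w * b)%R = 1%R.

(* The binary form of degree n whose dehomogenization F(x,1) is f:
   F(a,b) = \sum_{k <= n} f_k a^k b^(n-k). *)
Definition form_eval (R : ringType) (n : nat) (f : {poly R}) (a b : R) : R :=
  (\sum_(k < n.+1) f`_k * a ^+ k * b ^+ (n - k))%R.

(* Since F(a,b) = h has positive valuation while a O_K + b O_K = O_K, the
   element b must be a unit: otherwise a is a unit and the monic term a^n
   makes F(a,b) a unit.  Hence F(a,b) = \prod_j (a - alpha_j b) and, by the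
   ultrametric inequality, v(a - alpha_j b) = min(M, v(alpha_i - alpha_j)) for
   the maximal value M = v(a - alpha_i b).  So v(h) = M + \sum_{j <> i}
   min(M, v(alpha_i - alpha_j)), a strictly increasing function of M, and M is
   determined by h. *)
From HB Require Import structures.
From mathcomp Require Import all_boot all_order all_algebra all_field.
From mathcomp Require Import constructive_ereal.
From mathcomp Require Import zify ring.
Import Order.TTheory GRing.Theory Num.Theory.
Local Open Scope ring_scope.
Local Open Scope ereal_scope.

Section DiscreteValuation.
Context {R : fieldType} {v : R -> \bar int}.
Hypothesis Hv : normalized_discrete_valuation v.

Lemma val_eqy x : v x = +oo <-> x = 0%R.
Proof. by case: Hv. Qed.

Lemma val0 : v 0%R = +oo.
Proof. exact/val_eqy. Qed.

Lemma valM x y : v (x * y)%R = v x + v y.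
Proof. by case: Hv. Qed.

Lemma valD_min x y : mine (v x) (v y) <= v (x + y)%R.
Proof. by case: Hv. Qed.

Lemma val1 : v 1%R = 0.
Proof.
have := valM 1 1; rewrite mulr1.
case E: (v 1%R) => [r| |].
- by rewrite -EFinD => -[] rr; have -> : r = 0%R by lia.
- by move/val_eqy: E => /eqP; rewrite oner_eq0.
- case: Hv => _ _ _ /(_ 0%R) [x]; rewrite -(mulr1 x) valM E.
  by case: (v x).
Qed.

Lemma val_neqNy x : v x != -oo.
Proof.
have [->|x0] := eqVneq x 0%R; first by rewrite val0.
apply/eqP => vx; have := val1; rewrite -(mulfV x0) valM vx.
by case: (v _).
Qed.

Lemma valN x : v (- x)%R = v x.
Proof.
suff vN1 : v (-1)%R = 0 by rewrite -mulN1r valM vN1 add0e.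
have := valM (-1) (-1); rewrite mulrNN mulr1 val1.
have := val_neqNy (-1)%R; case E: (v (-1)%R) => [r| |] //.
by rewrite -EFinD => _ [] rr; have -> : r = 0%R by lia.
Qed.

Lemma valD_lt x y : v x < v y -> v (x + y)%R = v x.
Proof.
move=> lt; apply/eqP; rewrite eq_le; apply/andP; split; last first.
  by have := valD_min x y; rewrite /Order.min lt.
have := valD_min (x + y)%R (- y)%R; rewrite addrK valN ge_min => /orP[] // le.
by have := lt_le_trans lt le; rewrite ltxx.
Qed.

Lemma val_min_sub x y : v y <= v x -> v y = mine (v x) (v (y - x)%R).
Proof.
have [lt _|eq le] := ltP (v y) (v x).
  by rewrite valD_lt ?valN // (min_idPr (ltW lt)).
have vxy : v y = v x by apply/eqP; rewrite eq_le le.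
have := valD_min y (- x)%R; rewrite valN vxy minxx => ge.
by rewrite (min_idPl ge).
Qed.

Lemma val_prod (I : Type) (s : seq I) (P : pred I) (F : I -> R) :
  v (\prod_(i <- s | P i) F i)%R = \sum_(i <- s | P i) v (F i).
Proof. exact: (big_morph v valM val1). Qed.

Lemma val_sum_gt0 (I : Type) (s : seq I) (P : pred I) (F : I -> R) :
  (forall i, P i -> 0 < v (F i)) -> 0 < v (\sum_(i <- s | P i) F i)%R.
Proof.
move=> F_gt0; apply: (big_ind (fun x => 0 < v x)) => //; first by rewrite val0.
by move=> x y vx vy; apply: lt_le_trans (valD_min x y); rewrite lt_min vx vy.
Qed.

Lemma val_exp_ge0 x k : 0 <= v x -> 0 <= v (x ^+ k)%R.
Proof.
move=> vx; elim: k => [|k IHk]; first by rewrite expr0 val1.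
by rewrite exprS valM adde_ge0.
Qed.

Lemma val_exp_eq0 x k : v x = 0 -> v (x ^+ k)%R = 0.
Proof.
move=> vx; elim: k => [|k IHk]; first by rewrite expr0 val1.
by rewrite exprS valM vx IHk adde0.
Qed.

Lemma val_prod_linear_factors n (alpha : 'I_n -> R) (i : 'I_n) (x y : R) :
  v y = 0 -> (forall j, v (x - alpha j * y)%R <= v (x - alpha i * y)%R) ->
  v (\prod_(j < n) (x - alpha j * y))%R = v (x - alpha i * y)%R +
    \sum_(j < n | j != i) mine (v (x - alpha i * y)%R) (v (alpha i - alpha j)%R).
Proof.
move=> y_unit i_max; rewrite val_prod (bigD1 i) //=; congr (_ + _).
apply: eq_bigr => j _; rewrite (val_min_sub _ _ (i_max j)).
have -> : ((x - alpha j * y) - (x - alpha i * y) = (alpha i - alpha j) * y)%R by ring.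
by rewrite valM y_unit adde0.
Qed.

End DiscreteValuation.

Lemma adde_ge0_gt0 (R : realDomainType) (x y : \bar R) :
  0 <= x -> 0 < y -> 0 < x + y.
Proof. by move=> x0 y0; apply: lt_le_trans y0 (leeDr _ x0). Qed.

Lemma sum_min_inj (R : realDomainType) (I : Type) (s : seq I) (P : pred I)
    (c : I -> \bar R) (M M' : \bar R) :
  (forall j, c j != -oo) -> M != -oo -> M' != -oo ->
  M + \sum_(j <- s | P j) mine M (c j) = M' + \sum_(j <- s | P j) mine M' (c j) ->
  M = M'.
Proof.
move=> cNy.
suff incr x y : x != -oo -> x < y ->
    x + \sum_(j <- s | P j) mine x (c j) < y + \sum_(j <- s | P j) mine y (c j).
  move=> MNy M'Ny; have [lt|lt|//] := ltgtP M M'.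
  - by move=> eq; have := incr _ _ MNy lt; rewrite eq ltxx.
  - by move=> eq; have := incr _ _ M'Ny lt; rewrite eq ltxx.
move=> xNy lt; apply: lte_leD => //; last first.
  by apply: lee_sum => j _; exact: le_min2 (ltW lt) (lexx _).
have [r ->] : exists r : R, x = r%:E.
  by move: xNy lt; case: x => [r| |] //; [exists r | rewrite ltNge leey].
apply: (big_ind (fun z => z \is a fin_num)) => // [z w|j _].
  by rewrite fin_numD => -> ->.
move: (cNy j); case: (c j) => [t| |] _ //; last by rewrite (min_idPl (leey _)).
by rewrite /Order.min; case: ifP.
Qed.

Section PrimitiveSolutions.
Context {K : fieldType} {vK : K -> \bar int}.
Hypothesis HvK : normalized_discrete_valuation vK.

Lemma primitive_val_eq0 a b : primitive_pair vK a b -> 0 < vK b -> vK a = 0.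
Proof.
move=> [a_ge0 [_ [u [w [u_ge0 [w_ge0 Bezout]]]]]] b_gt0.
apply/eqP; rewrite eq_le a_ge0 andbT leNgt; apply/negP => a_gt0.
have := valD_min HvK (u * a)%R (w * b)%R.
rewrite Bezout val1 // !valM //.
by rewrite lt_geF // lt_min !adde_ge0_gt0.
Qed.

Context {n : nat} {f : {poly K}}.
Hypotheses (f_monic : f \is monic) (f_size : size f = n.+1)
  (f_int : forall k, in_OK vK f`_k).

Lemma val_form_eval_eq0 a b :
  primitive_pair vK a b -> 0 < vK b -> vK (form_eval n f a b) = 0.
Proof.
move=> Hab b_gt0; have a_unit := primitive_val_eq0 _ _ Hab b_gt0.
have f_lead : (f`_n = 1)%R by move/monicP: f_monic; rewrite /lead_coef f_size.
rewrite /form_eval big_ord_recr /= subnn expr0 mulr1 f_lead mul1r addrC.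
rewrite valD_lt // val_exp_eq0 //; apply: val_sum_gt0 => // k _.
have [a_ge0 [b_ge0 _]] := Hab.
rewrite -(subnSK (ltn_ord k)) exprS !valM //.
rewrite adde_ge0_gt0 ?adde_ge0 ?val_exp_ge0 //.
  exact: f_int.
by rewrite addeC adde_ge0_gt0 ?val_exp_ge0.
Qed.

Lemma primitive_solution_val_eq0 a b :
  primitive_pair vK a b -> vK (form_eval n f a b) != 0 -> vK b = 0.
Proof.
move=> Hab; have [b_gt0|b_le0 _] := ltP 0 (vK b).
  by rewrite (val_form_eval_eq0 _ _ Hab b_gt0) eqxx.
by apply/eqP; rewrite eq_le b_le0; case: Hab => _ [].
Qed.

End PrimitiveSolutions.

Lemma form_eval_prod {K : fieldType} {L : fieldExtType K} {n : nat} {f : {poly K}}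
    {alpha : 'I_n -> L} (a b : K) :
  size f = n.+1 ->
  map_poly (in_alg L) f = (\prod_(j < n) ('X - (alpha j)%:P))%R ->
  (b%:A : L) != 0%R ->
  ((form_eval n f a b)%:A = \prod_(j < n) (a%:A - alpha j * b%:A) :> L)%R.
Proof.
move=> f_size f_split b0; set x : L := (a%:A)%R; set y : L := (b%:A)%R.
have -> : (\prod_(j < n) (x - alpha j * y) =
           y ^+ n * (map_poly (in_alg L) f).[x / y])%R.
  have -> : (y ^+ n = \prod_(j < n) y)%R by rewrite prodr_const card_ord.
  rewrite f_split horner_prod -big_split /=.
  by apply: eq_bigr => j _; rewrite hornerXsubC; field.
rewrite (horner_coef_wide (n := n.+1)); last by rewrite size_map_poly f_size.
rewrite /form_eval -in_algE rmorph_sum mulr_sumr; apply: eq_bigr => k _.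
rewrite coef_map /= -in_algE !rmorphM !rmorphXn /= -/x -/y.
rewrite expr_div_n exprB ?leq_ord ?unitfE //.
by field; rewrite expf_neq0.
Qed.

Theorem lemma2p3
  (K : fieldType) (vK : K -> \bar int)
  (HvK : normalized_discrete_valuation vK) (HKc : v_complete vK)
  (n : nat) (f : {poly K})
  (Hfmon : f \is monic) (Hfsz : size f = n.+1)
  (HfO : forall k : nat, in_OK vK f`_k)
  (L : fieldExtType K)
  (HL : splittingFieldFor 1%VS (map_poly (in_alg L) f) fullv)
  (v : L -> \bar int) (Hv : normalized_discrete_valuation v)
  (Hext : exists e : nat, (0 < e)%N /\ forall x : K, v (x%:A)%R = (e%:Z)%:E * vK x)
  (alpha : 'I_n -> L)
  (Halpha : map_poly (in_alg L) f = (\prod_(j < n) ('X - (alpha j)%:P))%R)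
  (h : K) (HhO : in_OK vK h) (Hh : 0 < v (h%:A)%R)
  (a b a' b' : K)
  (Hab : primitive_pair vK a b) (Hab' : primitive_pair vK a' b')
  (Hsol : form_eval n f a b = h) (Hsol' : form_eval n f a' b' = h)
  (i : 'I_n)
  (Hmax : forall j : 'I_n, v (a%:A - alpha j * b%:A)%R <= v (a%:A - alpha i * b%:A)%R)
  (Hmax' : forall j : 'I_n, v (a'%:A - alpha j * b'%:A)%R <= v (a'%:A - alpha i * b'%:A)%R) :
  v (a%:A - alpha i * b%:A)%R = v (a'%:A - alpha i * b'%:A)%R.
Proof.
case: Hext => e [_ He].
have vKh : vK h != 0 by apply: contraTneq Hh => vKh0; rewrite He vKh0 mule0 ltxx.
have val_h x y : primitive_pair vK x y -> form_eval n f x y = h ->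
    (forall j, v (x%:A - alpha j * y%:A)%R <= v (x%:A - alpha i * y%:A)%R) ->
    v (h%:A)%R = v (x%:A - alpha i * y%:A)%R + \sum_(j < n | j != i)
      mine (v (x%:A - alpha i * y%:A)%R) (v (alpha i - alpha j)%R).
  move=> Hxy Hs i_max.
  have y_unit : v (y%:A)%R = 0.
    rewrite He (primitive_solution_val_eq0 HvK Hfmon Hfsz HfO _ _ Hxy) ?Hs //.
    by rewrite mule0.
  rewrite -Hs (form_eval_prod x y Hfsz Halpha); last first.
    by apply/eqP => /(val_eqy Hv); rewrite y_unit.
  exact: val_prod_linear_factors.
have := val_h a' b' Hab' Hsol' Hmax'; rewrite (val_h a b Hab Hsol Hmax).
by apply: sum_min_inj => [j||]; exact: val_neqNy.
Qed.
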